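(* Let $\mathcal D_0$ be an ordered, oriented Descartes configuration. Then no two distinct circles of the geometric Apollonian super-packing generated by $\mathcal D_0$ cross each other transversally (i.e. no two distinct circles of it meet in exactly two points). Circles of the super-packing may be nested inside one another or tangent to each other.
   Context: Circles are taken in the Riemann sphere $\hat{\mathbb C}=\mathbb R^2\cup\{\infty\}$; lines count as circles. A Descartes configuration is a set of four mutually tangent circles with disjoint interiors (the interior of a circle being one of its two complementary open regions, of a line one of its open half-planes). An ordered, oriented Descartes configuration $\mathcal D=(C_1,C_2,C_3,C_4)$ is such a configuration with an ordering and a total orientation: positively oriented if the interiors are the disjoint ones, negatively oriented if every interior is replaced by the complementary region. The signed curvature $b_i$ of $C_i$ is $1/r$ if its interior is the bounded disk of radius $r$, $-1/r$ if its interior is the unbounded complementary region, $0$ for a line (all signs reversed for negative orientation). The augmented curvature-center coordinate matrix $W_{\mathcal D}$ is the $4\times4$ matrix whose $i$-th row is $(\bar b_i, b_i, b_ix_i, b_iy_i)$, where $(x_i,y_i)$ is the center of $C_i$ and $\bar b_i=b_i(x_i^2+y_i^2)-1/b_i$ is the signed curvature of the image of $C_i$ under inversion in the unit circle; for a line the row is $(2\,p\cdot n,0,n_x,n_y)$ with $n$ the unit normal pointing into its interior and $p$ any point of the line. $W_{\mathcal D}$ determines $\mathcal D$, and a real $4\times 4$ matrix $W$ equals $W_{\mathcal D}$ for some ordered oriented Descartes configuration iff $W^TQ_DW=Q_W$, where $Q_D=I-\tfrac12\mathbf 1\mathbf 1^T$ and $Q_W=\begin{pmatrix}0&-4&0&0\\-4&0&0&0\\0&0&2&0\\0&0&0&2\end{pmatrix}$.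 Let $S_i$ ($i=1,\dots,4$) be the $4\times4$ integer matrix equal to the identity except that its $i$-th row has entry $-1$ in position $i$ and $2$ in the other three positions; e.g. $S_1=\begin{pmatrix}-1&2&2&2\\0&1&0&0\\0&0&1&0\\0&0&0&1\end{pmatrix}$. Let $S_i^\perp=S_i^T$. The Apollonian group $\mathcal A=\langle S_1,\dots,S_4\rangle$, the dual Apollonian group $\mathcal A^\perp=\langle S_1^\perp,\dots,S_4^\perp\rangle$, and the super-Apollonian group $\mathcal A^S=\langle S_1,\dots,S_4,S_1^\perp,\dots,S_4^\perp\rangle$ act on ordered oriented Descartes configurations by $W_{U[\mathcal D]}=UW_{\mathcal D}$. The (algebraic) super-packing generated by $\mathcal D_0$ is the orbit $\mathcal A^S[\mathcal D_0]$; the geometric super-packing generated by $\mathcal D_0$ is the set of all circles belonging to configurations in $\mathcal A^S[\mathcal D_0]$ (it does not depend on the ordering and orientation of $\mathcal D_0$). *)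

From HB Require Import structures.
From mathcomp Require Import all_boot all_order all_algebra.
From mathcomp Require Import reals.
Set Implicit Arguments. Unset Strict Implicit. Unset Printing Implicit Defensive.
Import Order.TTheory GRing.Theory Num.Theory.
Local Open Scope ring_scope.

Section Apollonian.
Variable R : realType.

(* Points of the Riemann sphere: [Some (x,y)] is a point of R^2, [None] is oo. *)
Definition sphere_pt := option (R * R).

(* An oriented circle in the Riemann sphere, i.e. a circle together with the
   choice of its interior (one of its two complementary open regions;
   the orientation of a Descartes configuration is absorbed in this choice).
   - [OCirc c r inner] : circle of center c and radius r (> 0); its interior
     is the bounded open disk if [inner = true], the unbounded complementary
     region if [inner = false].
   - [OLine p n] : the line through p with unit normal n; its interior is
     the open half-plane into which n points. *)
Inductive ocircle :=
| OCirc of (R * R) & R & bool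
| OLine of (R * R) & (R * R).

Definition ocircle_valid (C : ocircle) : Prop :=
  match C with
  | OCirc _ r _ => 0 < r
  | OLine _ n => n.1 ^+ 2 + n.2 ^+ 2 = 1
  end.

Definition on_circle (C : ocircle) (z : sphere_pt) : Prop :=
  match C, z with
  | OCirc c r _, Some q => (q.1 - c.1) ^+ 2 + (q.2 - c.2) ^+ 2 = r ^+ 2
  | OCirc _ _ _, None => False
  | OLine p n, Some q => n.1 * (q.1 - p.1) + n.2 * (q.2 - p.2) = 0
  | OLine _ _, None => True
  end.

Definition curv (C : ocircle) : R :=
  match C with
  | OCirc _ r inner => if inner then r^-1 else - r^-1
  | OLine _ _ => 0
  end.

(* The augmented curvature-center coordinate row (bbar, b, b x, b y). *)
Definition acc_row (C : ocircle) : 'rV[R]_4 :=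
  match C with
  | OCirc c r inner =>
      let b := curv C in
      \row_(j < 4) [:: b * (c.1 ^+ 2 + c.2 ^+ 2) - b^-1; b; b * c.1; b * c.2]`_j
  | OLine p n =>
      \row_(j < 4) [:: 2 * (p.1 * n.1 + p.2 * n.2); 0; n.1; n.2]`_j
  end.

Definition Q_D : 'M[R]_4 := 1%:M - (1 / 2) *: const_mx 1.

Definition Q_W : 'M[R]_4 :=
  \matrix_(i < 4, j < 4)
    (nth 0 (nth [::] [:: [:: 0; -4; 0; 0]; [:: -4; 0; 0; 0];
                       [:: 0; 0; 2; 0]; [:: 0; 0; 0; 2]] i) j : R).

(* W is the augmented curvature-center coordinate matrix of some ordered,
   oriented Descartes configuration. *)
Definition is_ACC_matrix (W : 'M[R]_4) : Prop := W^T *m Q_D *m W = Q_W.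

Definition S_gen (i : 'I_4) : 'M[R]_4 :=
  \matrix_(j < 4, k < 4)
    (if j == i then (if k == i then -1 else 2) else (j == k)%:R).

Inductive superApollonian : 'M[R]_4 -> Prop :=
| sA_one : superApollonian 1%:M
| sA_S i U : superApollonian U -> superApollonian (S_gen i *m U)
| sA_Sinv i U : superApollonian U -> superApollonian (invmx (S_gen i) *m U)
| sA_ST i U : superApollonian U -> superApollonian ((S_gen i)^T *m U)
| sA_STinv i U : superApollonian U -> superApollonian (invmx ((S_gen i)^T) *m U).

(* C belongs to the geometric super-packing generated by the configuration
   with ACC matrix W0: C is one of the circles of some configuration
   U[D0], U in A^S, i.e. its ACC row is a row of U W0. *)
Definition in_geometric_superpacking (W0 : 'M[R]_4) (C : ocircle) : Prop :=
  ocircle_valid C /\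
  exists U i, superApollonian U /\ row i (U *m W0) = acc_row C.

Definition meet_in_exactly_two_points (C1 C2 : ocircle) : Prop :=
  exists z1 z2 : sphere_pt, z1 <> z2 /\
    forall z, (on_circle C1 z /\ on_circle C2 z) <-> (z = z1 \/ z = z2).

End Apollonian.

From HB Require Import structures.
From mathcomp Require Import all_boot all_order all_algebra.
From mathcomp Require Import reals.
From mathcomp Require Import ring lra.
Import Order.TTheory GRing.Theory Num.Theory.
Local Open Scope ring_scope.
Set Implicit Arguments. Unset Strict Implicit.

(* For rows of circles, [inversive] below is the inversive product, which is
   [cos theta] in (-1, 1) for two circles crossing at angle [theta].  The ACC
   relation turns it into [2 u.v - (sum u)(sum v)] for the rows [u], [v] of
   super-Apollonian matrices producing the two circles, and these matrices are
   integral with odd row sums, so it is an odd integer.  Hence, for rows [x1],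
   [x2] of two circles of the super-packing and a suitable sign [s], the row
   [x1 + s x2] has nonpositive inversive norm; such a row vanishes as soon as
   its equation has two distinct roots, so two circles meeting in two points
   coincide. *)

Local Notation o0 := (@Ordinal 4 0 isT).
Local Notation o1 := (@Ordinal 4 1 isT).
Local Notation o2 := (@Ordinal 4 2 isT).
Local Notation o3 := (@Ordinal 4 3 isT).

Ltac case_ord4 i := case: i => -[|[|[|[|//]]]] ?.

Lemma sum_ord4 (V : nmodType) (F : 'I_4 -> V) :
  \sum_(k < 4) F k = F o0 + F o1 + F o2 + F o3.
Proof.
rewrite !big_ord_recr big_ord0 /= add0r.
by congr (F _ + F _ + F _ + F _); apply: val_inj.
Qed.

Lemma eq_iff_scaled_eq0 (R : idomainType) (k X Y E : R) :
  k != 0 -> E = k * (X - Y) -> (X = Y <-> E = 0).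
Proof.
move=> k_neq0 ->; split=> [->|/eqP]; first by rewrite subrr mulr0.
by rewrite mulf_eq0 (negbTE k_neq0) subr_eq0 => /eqP.
Qed.

Lemma sqr_add_le0 (R : realDomainType) (u v : R) : u ^+ 2 + v ^+ 2 <= 0 -> u = 0 /\ v = 0.
Proof.
move=> uv_le0; have /andP[u2 v2] : (u ^+ 2 == 0) && (v ^+ 2 == 0).
  by rewrite -paddr_eq0 ?sqr_ge0 // eq_le uv_le0 addr_ge0 ?sqr_ge0.
by split; apply/eqP; rewrite -sqrf_eq0.
Qed.

Section OddIntegers.
Variable R : archiRealFieldType.
Implicit Types x y : R.

Definition odd_int x : bool := (x - 1) / 2 \is a Num.int.

Lemma odd_intP x :
  reflect (exists2 k, k \is a Num.int & x = 2 * k + 1) (odd_int x).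
Proof.
apply: (iffP idP) => [xodd|[k kint ->]]; last by rewrite /odd_int mulrC addrK mulKf ?pnatr_eq0.
by exists ((x - 1) / 2) => //; field.
Qed.

Lemma odd_intN x : odd_int x -> odd_int (- x).
Proof.
case/odd_intP=> k kint ->; apply/odd_intP; exists (- k - 1).
  by rewrite rpredB ?rpredN ?rpred1.
ring.
Qed.

Lemma odd_intM x y : odd_int x -> odd_int y -> odd_int (x * y).
Proof.
case/odd_intP=> k kint ->; case/odd_intP=> l lint ->; apply/odd_intP.
exists (2 * k * l + k + l); last by ring.
by rewrite !rpredD ?rpredM // natr_int.
Qed.

Lemma odd_intD_even x y : odd_int x -> y \is a Num.int -> odd_int (x + 2 * y).
Proof.
case/odd_intP=> k kint -> yint; apply/odd_intP; exists (k + y); last by ring.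
exact: rpredD.
Qed.

Lemma odd_int_sign x : odd_int x -> exists s : R, s ^+ 2 = 1 /\ 1 + s * x <= 0.
Proof.
case/odd_intP=> k kint ->; have [k_ge0|k_lt0] := leP 0 k.
  by exists (-1); split; [rewrite sqrrN expr1n | lra].
have : 1 <= `|k| by rewrite norm_intr_ge1 // lt_eqF.
by rewrite ltr0_norm // => k_le; exists 1; split; [rewrite expr1n | lra].
Qed.

End OddIntegers.

Section OddRowSums.
Variables (R : archiRealFieldType) (n : nat).

Definition int_mx_odd_rows (M : 'M[R]_n) : Prop :=
  (forall i j, M i j \is a Num.int) /\ forall i, odd_int (\sum_j M i j).

Lemma int_mx_odd_rows1 : int_mx_odd_rows 1%:M.
Proof.
split=> [i j|i]; first by rewrite mxE natr_int.
rewrite (bigD1 i) //= big1 => [|j /negbTE ji]; last by rewrite mxE eq_sym ji.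
by rewrite !mxE eqxx addr0; apply/odd_intP; exists 0; rewrite ?rpred0 // mulr0 add0r.
Qed.

Lemma int_mx_odd_rows_mul M N :
  int_mx_odd_rows M -> int_mx_odd_rows N -> int_mx_odd_rows (M *m N).
Proof.
move=> [Mint Modd] [Nint Nodd]; split=> [i j|i].
  by rewrite mxE rpred_sum // => k _; rewrite rpredM.
pose c k := ((\sum_j N k j) - 1) / 2.
have -> : \sum_j (M *m N) i j = \sum_k M i k + 2 * \sum_k M i k * c k.
  rewrite mulr_sumr -big_split /=; under eq_bigr do rewrite mxE.
  rewrite exchange_big /=; apply: eq_bigr => k _.
  by rewrite -mulr_sumr /c; field.
by apply: odd_intD_even => //; apply: rpred_sum => k _; exact: rpredM (Mint i k) (Nodd k).
Qed.

End OddRowSums.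

Section SuperApollonianParity.
Variable R : realType.

Lemma S_gen_involutive i : S_gen R i *m S_gen R i = 1%:M.
Proof.
apply/matrixP => a b; rewrite !mxE sum_ord4 !mxE.
by case_ord4 i; case_ord4 a; case_ord4 b; rewrite /=; ring.
Qed.

Lemma invmx_S_gen i : invmx (S_gen R i) = S_gen R i.
Proof.
have [Sunit _] := mulmx1_unit (S_gen_involutive i).
by rewrite -[RHS](mulKmx Sunit) S_gen_involutive mulmx1.
Qed.

Lemma invmx_trS_gen i : invmx (S_gen R i)^T = (S_gen R i)^T.
Proof. by rewrite -trmx_inv invmx_S_gen. Qed.

Lemma S_gen_int i j k : S_gen R i j k \is a Num.int.
Proof. by rewrite mxE; do 2?case: ifP => _; rewrite ?rpredN ?int_num1 ?natr_int. Qed.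

Lemma S_gen_row_sum i j : \sum_k S_gen R i j k = if j == i then 5 else 1.
Proof.
by rewrite sum_ord4 !mxE; case_ord4 i; case_ord4 j; rewrite /=; ring.
Qed.

Lemma trS_gen_row_sum i j : \sum_k (S_gen R i)^T j k = if j == i then -1 else 3.
Proof.
by rewrite sum_ord4 !mxE; case_ord4 i; case_ord4 j; rewrite /=; ring.
Qed.

Lemma odd_int_nat m : odd_int (m.*2.+1%:R : R).
Proof.
apply/odd_intP; exists m%:R; first exact: natr_int.
by rewrite -addn1 natrD -muln2 natrM mulrC.
Qed.

Lemma int_mx_odd_rows_S_gen i : int_mx_odd_rows (S_gen R i).
Proof.
split=> [j k|j]; first exact: S_gen_int.
by rewrite S_gen_row_sum; case: eqP => _; [exact: (odd_int_nat 2) | exact: (odd_int_nat 0)].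
Qed.

Lemma int_mx_odd_rows_trS_gen i : int_mx_odd_rows (S_gen R i)^T.
Proof.
split=> [j k|j]; first by rewrite mxE S_gen_int.
rewrite trS_gen_row_sum; case: eqP => _; last exact: (odd_int_nat 1).
exact: odd_intN (odd_int_nat 0).
Qed.

Lemma superApollonian_odd_rows (U : 'M[R]_4) : superApollonian U -> int_mx_odd_rows U.
Proof.
elim=> [|i V _ IH|i V _ IH|i V _ IH|i V _ IH].
- exact: int_mx_odd_rows1.
- exact: int_mx_odd_rows_mul (int_mx_odd_rows_S_gen i) IH.
- by rewrite invmx_S_gen; exact: int_mx_odd_rows_mul (int_mx_odd_rows_S_gen i) IH.
- exact: int_mx_odd_rows_mul (int_mx_odd_rows_trS_gen i) IH.
- by rewrite invmx_trS_gen; exact: int_mx_odd_rows_mul (int_mx_odd_rows_trS_gen i) IH.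
Qed.

End SuperApollonianParity.

Section InversiveForm.
Variable R : realType.
Implicit Types (x y : 'rV[R]_4) (W : 'M[R]_4).

Definition Q_Winv : 'M[R]_4 :=
  \matrix_(i < 4, j < 4)
    (nth 0 (nth [::] [:: [:: 0; -(1/4); 0; 0]; [:: -(1/4); 0; 0; 0];
                       [:: 0; 0; 1/2; 0]; [:: 0; 0; 0; 1/2]] i) j : R).

Lemma Q_W_mulmx_inv : Q_W R *m Q_Winv = 1%:M.
Proof.
apply/matrixP => a b; rewrite !mxE sum_ord4 !mxE.
by case_ord4 a; case_ord4 b; rewrite /=; field.
Qed.

Lemma Q_D_involutive : Q_D R *m Q_D R = 1%:M.
Proof.
apply/matrixP => a b; rewrite /Q_D !mxE sum_ord4 !mxE.
by case_ord4 a; case_ord4 b; rewrite /=; field.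
Qed.

Lemma ACC_matrix_dual W : is_ACC_matrix W -> W *m Q_Winv *m W^T = Q_D R.
Proof.
move=> WACC; have /mulmx1C WQWinv : W^T *m Q_D R *m (W *m Q_Winv) = 1%:M.
  by rewrite mulmxA WACC Q_W_mulmx_inv.
by rewrite -[LHS]mulmx1 -Q_D_involutive !mulmxA -(mulmxA _ W^T) WQWinv mul1mx.
Qed.

Definition inversive x y : R := 2 * (x *m Q_Winv *m y^T) 0 0.

Lemma inversiveE x y : inversive x y =
  x 0 o2 * y 0 o2 + x 0 o3 * y 0 o3 - (x 0 o0 * y 0 o1 + x 0 o1 * y 0 o0) / 2.
Proof.
rewrite /inversive !mxE sum_ord4 !mxE !sum_ord4 !mxE /=.
have -> : (0 : 'I_1) = ord0 by apply: val_inj.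
by field.
Qed.

Lemma inversive_add_scale x y s : inversive (x + s *: y) (x + s *: y) =
  inversive x x + 2 * s * inversive x y + s ^+ 2 * inversive y y.
Proof. by rewrite !inversiveE !mxE; field. Qed.

Lemma inversive_ACC_rows W (U V : 'M[R]_4) i j : is_ACC_matrix W ->
  inversive (row i (U *m W)) (row j (V *m W)) =
  2 * \sum_k U i k * V j k - (\sum_k U i k) * (\sum_k V j k).
Proof.
move=> WACC; rewrite /inversive !row_mul trmx_mul.
have -> : row i U *m W *m Q_Winv *m (W^T *m (row j V)^T) =
          row i U *m (W *m Q_Winv *m W^T) *m (row j V)^T by rewrite !mulmxA.
rewrite ACC_matrix_dual // /Q_D.
by rewrite !mxE !sum_ord4 !mxE !sum_ord4 !mxE /=; field.
Qed.

Lemma odd_int_inversive_superApollonian W U V i j :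
  is_ACC_matrix W -> superApollonian U -> superApollonian V ->
  odd_int (inversive (row i (U *m W)) (row j (V *m W))).
Proof.
move=> WACC /superApollonian_odd_rows[Uint Uodd] /superApollonian_odd_rows[Vint Vodd].
rewrite inversive_ACC_rows // addrC; apply: odd_intD_even.
  exact: odd_intN (odd_intM (Uodd i) (Vodd j)).
by apply: rpred_sum => k _; rewrite rpredM.
Qed.

Lemma inversive_acc_row C : ocircle_valid C -> inversive (acc_row C) (acc_row C) = 1.
Proof.
rewrite inversiveE; case: C => [c r inner | p n] /= Cvalid; rewrite !mxE /= ?nth0 /=.
  have r_neq0 : r != 0 by rewrite gt_eqF.
  by case: inner; field.
by rewrite -Cvalid; ring.
Qed.

(* The point [z] lies on [C] iff [circ_eq (acc_row C) z = 0]: for a circle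
   [circ_eq] is [curv C] times the equation of [C], for a line [-2] times. *)
Definition circ_eq x (z : sphere_pt R) : R :=
  match z with
  | Some q => x 0 o0 + x 0 o1 * (q.1 ^+ 2 + q.2 ^+ 2) - 2 * (x 0 o2 * q.1 + x 0 o3 * q.2)
  | None => x 0 o1
  end.

Lemma circ_eqD x y z : circ_eq (x + y) z = circ_eq x z + circ_eq y z.
Proof. by case: z => [q|] /=; rewrite !mxE; ring. Qed.

Lemma circ_eqZ s x z : circ_eq (s *: x) z = s * circ_eq x z.
Proof. by case: z => [q|] /=; rewrite !mxE; ring. Qed.

Lemma curv_circ_neq0 (c : R * R) r inner : 0 < r -> curv (OCirc c r inner) != 0.
Proof. by move=> r_gt0; case: inner; rewrite /= ?oppr_eq0 invr_eq0 gt_eqF. Qed.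

Lemma on_circleE C z : ocircle_valid C -> on_circle C z <-> circ_eq (acc_row C) z = 0.
Proof.
case: C => [c r inner | p n] /= Cvalid; case: z => [q|] //=; rewrite !mxE /= ?nth0 //=.
- have /= b_neq0 := curv_circ_neq0 c inner Cvalid.
  have r_neq0 : r != 0 by rewrite gt_eqF.
  by apply: (eq_iff_scaled_eq0 b_neq0); case: inner b_neq0 => _; field.
- have /= b_neq0 := curv_circ_neq0 c inner Cvalid.
  by split=> // /eqP; rewrite (negbTE b_neq0).
- have m2_neq0 : -2 != 0 :> R by rewrite oppr_eq0 pnatr_eq0.
  by apply: (eq_iff_scaled_eq0 m2_neq0); ring.
Qed.

Lemma sqr_center_circ_eq x q :
  (x 0 o1 * q.1 - x 0 o2) ^+ 2 + (x 0 o1 * q.2 - x 0 o3) ^+ 2 =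
  inversive x x + x 0 o1 * circ_eq x (Some q).
Proof. by rewrite inversiveE /=; field. Qed.

(* A row of nonpositive inversive norm is a point-circle or an empty circle,
   so its equation has at most one root. *)
Lemma inversive_le0_root x q : inversive x x <= 0 -> circ_eq x (Some q) = 0 ->
  x 0 o1 * q.1 = x 0 o2 /\ x 0 o1 * q.2 = x 0 o3.
Proof.
move=> x_le0 xq0; have := sqr_center_circ_eq x q; rewrite xq0 mulr0 addr0 => sqr_eq.
rewrite -sqr_eq in x_le0; have [/eqP e1 /eqP e2] := sqr_add_le0 x_le0.
by split; apply/eqP; rewrite -subr_eq0.
Qed.

Lemma row4_eq0 x : x 0 o0 = 0 -> x 0 o1 = 0 -> x 0 o2 = 0 -> x 0 o3 = 0 -> x = 0.
Proof.
move=> x0 x1 x2 x3; apply/rowP => j; rewrite mxE.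
by case_ord4 j; [rewrite -x0 | rewrite -x1 | rewrite -x2 | rewrite -x3];
  congr (x _ _); apply: val_inj.
Qed.

Lemma inversive_le0_two_roots_eq0 x z1 z2 : z1 <> z2 ->
  circ_eq x z1 = 0 -> circ_eq x z2 = 0 -> inversive x x <= 0 -> x = 0.
Proof.
move=> z12 xz1 xz2 x_le0.
have rootE z : x 0 o1 != 0 -> circ_eq x z = 0 ->
    z = Some (x 0 o2 / x 0 o1, x 0 o3 / x 0 o1).
  move=> b_neq0; case: z => [[q1 q2]|]; last by move/eqP; rewrite (negbTE b_neq0).
  by move=> /(inversive_le0_root x_le0) [/= <- <-]; rewrite !(mulrC (x 0 o1)) !mulfK.
have [b_eq0|b_neq0] := eqVneq (x 0 o1) 0; last first.
  by case: z12; rewrite (rootE _ b_neq0 xz1) (rootE _ b_neq0 xz2).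
have [q xq0] : exists q, circ_eq x (Some q) = 0.
  case: z1 z12 xz1 => [q _|]; first by exists q.
  by case: z2 xz2 => [q ? _ _|_ []]; first by exists q.
have [c_eq0 d_eq0] : x 0 o2 = 0 /\ x 0 o3 = 0.
  by have [<- <-] := inversive_le0_root x_le0 xq0; rewrite b_eq0 !mul0r.
apply: row4_eq0 => //; rewrite -xq0 /= b_eq0 c_eq0 d_eq0; ring.
Qed.

Lemma on_circle_acc_row_scale (C1 C2 : ocircle R) k z :
  ocircle_valid C1 -> ocircle_valid C2 -> k != 0 ->
  acc_row C1 = k *: acc_row C2 -> (on_circle C1 z <-> on_circle C2 z).
Proof.
move=> C1valid C2valid k_neq0 C12; rewrite !on_circleE // C12 circ_eqZ.
by split=> [/eqP|->]; rewrite ?mulr0 // mulf_eq0 (negbTE k_neq0) => /eqP.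
Qed.

End InversiveForm.

Theorem theorem3p1 (R : realType) (W0 : 'M[R]_4) :
  is_ACC_matrix W0 ->
  forall C1 C2 : ocircle R,
    in_geometric_superpacking W0 C1 ->
    in_geometric_superpacking W0 C2 ->
    (exists z, ~ (on_circle C1 z <-> on_circle C2 z)) ->
    ~ meet_in_exactly_two_points C1 C2.
Proof.
move=> W0ACC C1 C2 [C1valid [U1 [i1 [U1sA C1row]]]] [C2valid [U2 [i2 [U2sA C2row]]]].
move=> [z0 C12_differ] [z1 [z2 [z12 C12_meet]]].
set x1 := acc_row C1; set x2 := acc_row C2.
have [s [s2 s_neg]] : exists s : R, s ^+ 2 = 1 /\ 1 + s * inversive x1 x2 <= 0.
  by apply: odd_int_sign; rewrite /x1 /x2 -C1row -C2row odd_int_inversive_superApollonian.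
have common_root z : z = z1 \/ z = z2 -> circ_eq (x1 + s *: x2) z = 0.
  case/C12_meet => /(on_circleE _ C1valid) C1z /(on_circleE _ C2valid) C2z.
  by rewrite circ_eqD circ_eqZ C1z C2z mulr0 addr0.
have x12 : x1 + s *: x2 = 0.
  apply: (inversive_le0_two_roots_eq0 z12 (common_root _ (or_introl erefl))
                                         (common_root _ (or_intror erefl))).
  by rewrite inversive_add_scale !inversive_acc_row // s2; lra.
apply: C12_differ; apply: (on_circle_acc_row_scale (k := - s)) => //.
  by rewrite oppr_eq0 -sqrf_eq0 s2 oner_eq0.
by apply/eqP; rewrite scaleNr -addr_eq0 x12.
Qed.
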